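(* Let $V$ be a finite set of INF sentences over a vocabulary $\Sigma$ and let $\tilde I$ be a four-valued $\Sigma$-structure with domain $D$. Then $\mathrm{tf}(\lim_{O(V)}(\tilde I)) = \mathrm{glb}_{\le_t}\{M \mid M \text{ a two-valued } \mathrm{tf}(\Sigma)\text{-structure with domain } D,\ M\models\Delta_V,\ \mathrm{tf}(\tilde I)\le_t M\}$, where $O(V)=\{O_\varphi\mid\varphi\in V\}$.
   Context: Vocabularies are finite sets of predicate symbols (equality interpreted as identity). Truth values $\mathbf{t},\mathbf{f},\mathbf{u},\mathbf{i}$; inverse swaps $\mathbf{t},\mathbf{f}$ and fixes $\mathbf{u},\mathbf{i}$. Truth order $\le_t$: $\mathbf{f}\le_t\mathbf{u}\le_t\mathbf{t}$, $\mathbf{f}\le_t\mathbf{i}\le_t\mathbf{t}$. Precision order $\le_p$: $\mathbf{u}\le_p\mathbf{t}\le_p\mathbf{i}$, $\mathbf{u}\le_p\mathbf{f}\le_p\mathbf{i}$. A four-valued $\Sigma$-structure $\tilde I$ has domain $D$ and assigns each $P/n\in\Sigma$ a function $P^{\tilde I}:D^n\to\{\mathbf{t},\mathbf{f},\mathbf{u},\mathbf{i}\}$; two-valued structures are identified with ordinary structures. $\le_p$ on structures is pointwise. Formula values $\tilde I\theta(\varphi)$: atoms via $P^{\tilde I}$, $\neg$ by inverse, $\wedge,\forall$ by $\le_t$-glb, $\vee,\exists$ by $\le_t$-lub. For two-valued structures over the same vocabulary and domain, $M\le_t M'$ means $P^M\subseteq P^{M'}$ for every predicate, and $\mathrm{glb}_{\le_t}$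 is pointwise intersection. Encoding: $\mathrm{tf}(\Sigma)=\{P^{ct}/n,P^{cf}/n\mid P/n\in\Sigma\}$; $\mathrm{tf}(\tilde I)$ is the two-valued $\mathrm{tf}(\Sigma)$-structure with domain $D$ and $(P^{ct})^{\mathrm{tf}(\tilde I)}=\{\overline{d}\mid P^{\tilde I}(\overline{d})\ge_p\mathbf{t}\}$, $(P^{cf})^{\mathrm{tf}(\tilde I)}=\{\overline{d}\mid P^{\tilde I}(\overline{d})\ge_p\mathbf{f}\}$. For formulas over $\Sigma$, $\varphi^{ct}$ and $\varphi^{cf}$ are defined by simultaneous induction: $(P(\overline{x}))^{ct}=P^{ct}(\overline{x})$, $(P(\overline{x}))^{cf}=P^{cf}(\overline{x})$; $(\neg\varphi)^{ct}=\varphi^{cf}$, $(\neg\varphi)^{cf}=\varphi^{ct}$; $(\varphi\wedge\psi)^{ct}=\varphi^{ct}\wedge\psi^{ct}$, $(\varphi\wedge\psi)^{cf}=\varphi^{cf}\vee\psi^{cf}$; $(\varphi\vee\psi)^{ct}=\varphi^{ct}\vee\psi^{ct}$, $(\varphi\vee\psi)^{cf}=\varphi^{cf}\wedge\psi^{cf}$; $(\forall x\varphi)^{ct}=\forall x\varphi^{ct}$, $(\forall x\varphi)^{cf}=\exists x\varphi^{cf}$; $(\exists x\varphi)^{ct}=\exists x\varphi^{ct}$, $(\exists x\varphi)^{cf}=\forall x\varphi^{cf}$. INF sentences: $\forall\overline{x}(\psi\supset L[\overline{x}])$ with $\psi$ having free variables among $\overline{x}$ and $L$ one of $P(\overline{x}),\neg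 P(\overline{x})$. INF propagator $O_\varphi$: $O_\varphi(\tilde I)$ agrees with $\tilde I$ except that for each $\overline{d}$ with $\tilde I[\overline{x}/\overline{d}](\psi)\ge_p\mathbf{t}$, $P^{O_\varphi(\tilde I)}(\overline{d})=\mathrm{lub}_{\le_p}\{\mathbf{t},P^{\tilde I}(\overline{d})\}$ (resp. with $\mathbf{f}$ if $L$ is negative). A $W$-refinement sequence from $\tilde I$ (for a set $W$ of operators) is a (possibly transfinite) sequence $\langle\tilde J_\xi\rangle_{\xi\le\alpha}$ with $\tilde J_0=\tilde I$, $\tilde J_{\xi+1}=O(\tilde J_\xi)$ for some $O\in W$, $\tilde J_\xi<_p\tilde J_{\xi+1}$, and $\le_p$-lubs at limits; stabilizing if $O(\tilde J_\alpha)=\tilde J_\alpha$ for all $O\in W$. For $W=O(V)$ all stabilizing sequences from $\tilde I$ have the same last element $\lim_{O(V)}(\tilde I)$. Rule sets: $\Delta_V=\{\forall\overline{x}\,((L[\overline{x}])^{ct}\leftarrow\psi^{ct})\mid\forall\overline{x}(\psi\supset L[\overline{x}])\in V\}$, where $(P(\overline{x}))^{ct}=P^{ct}(\overline{x})$ and $(\neg P(\overline{x}))^{ct}=P^{cf}(\overline{x})$. For a rule set $\Delta$ over $\mathrm{tf}(\Sigma)$, the operator $T_\Delta$ on two-valued $\mathrm{tf}(\Sigma)$-structures is: $\overline{d}\in Q^{T_\Delta(M)}$ iff $\overline{d}\in Q^M$ or there is a rule $\forall\overline{x}(Q(\overline{x})\leftarrow\chi)$ in $\Delta$ with $M[\overline{x}/\overline{d}]\models\chi$.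 $M\models\Delta$ iff $M$ is a fixpoint of $T_\Delta$. *)

From mathcomp Require Import all_boot.
From Stdlib Require Import ClassicalDescription.
From Stdlib Require List.
Set Implicit Arguments.
Unset Strict Implicit.
Unset Printing Implicit Defensive.

Definition dec (P : Prop) : bool :=
  if excluded_middle_informative P then true else false.

Inductive FV : Type := Vt | Vf | Vu | Vi.

Definition inv (a : FV) : FV :=
  match a with Vt => Vf | Vf => Vt | Vu => Vu | Vi => Vi end.

Definition le_t (a b : FV) : bool :=
  match a, b with
  | Vf, _ => true | _, Vt => true
  | Vu, Vu => true | Vi, Vi => true
  | _, _ => false end.

Definition le_p (a b : FV) : bool :=
  match a, b with
  | Vu, _ => true | _, Vi => true
  | Vt, Vt => true | Vf, Vf => true
  | _, _ => false end.

Definition glb_t2 (a b : FV) : FV :=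
  match a, b with
  | Vf, _ => Vf | _, Vf => Vf
  | Vt, x => x | x, Vt => x
  | Vu, Vu => Vu | Vi, Vi => Vi
  | _, _ => Vf end.
Definition lub_t2 (a b : FV) : FV :=
  match a, b with
  | Vt, _ => Vt | _, Vt => Vt
  | Vf, x => x | x, Vf => x
  | Vu, Vu => Vu | Vi, Vi => Vi
  | _, _ => Vt end.

Definition lub_p2 (a b : FV) : FV :=
  match a, b with
  | Vu, x => x | x, Vu => x
  | Vt, Vt => Vt | Vf, Vf => Vf
  | _, _ => Vi end.

Definition glb_tD (D : Type) (f : D -> FV) : FV :=
  if dec (exists d, f d = Vf) then Vf
  else if dec ((exists d, f d = Vu) /\ (exists d, f d = Vi)) then Vf
  else if dec (exists d, f d = Vu) then Vu
  else if dec (exists d, f d = Vi) then Vi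
  else Vt.
Definition lub_tD (D : Type) (f : D -> FV) : FV :=
  if dec (exists d, f d = Vt) then Vt
  else if dec ((exists d, f d = Vu) /\ (exists d, f d = Vi)) then Vt
  else if dec (exists d, f d = Vu) then Vu
  else if dec (exists d, f d = Vi) then Vi
  else Vf.

(* A vocabulary is a finite type S of predicate symbols with arities ar.
   Variables are natural numbers. *)
Inductive form (S : Type) (ar : S -> nat) : Type :=
| Atom (P : S) (xs : (ar P).-tuple nat)
| Neg of @form S ar
| And of @form S ar & @form S ar
| Or of @form S ar & @form S ar
| All of nat & @form S ar
| Ex of nat & @form S ar.

Arguments form : clear implicits.
Arguments Atom {S ar} P xs.
Arguments Neg {S ar}.
Arguments And {S ar}.
Arguments Or {S ar}.
Arguments All {S ar}.
Arguments Ex {S ar}.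

Fixpoint fv (S : Type) (ar : S -> nat) (phi : form S ar) : seq nat :=
  match phi with
  | Atom _ xs => tval xs
  | Neg a => fv a
  | And a b => fv a ++ fv b
  | Or a b => fv a ++ fv b
  | All x a => [seq y <- fv a | y != x]
  | Ex x a => [seq y <- fv a | y != x]
  end.

Definition upd (D : Type) (th : nat -> D) (x : nat) (d : D) : nat -> D :=
  fun y => if y == x then d else th y.
Fixpoint upds (D : Type) (th : nat -> D) (xs : seq nat) (ds : seq D) : nat -> D :=
  match xs, ds with
  | x :: xs', d :: ds' => upd (upds th xs' ds') x d
  | _, _ => th
  end.

Definition fstruct (S : Type) (ar : S -> nat) (D : Type) :=
  forall P : S, (ar P).-tuple D -> FV.
Arguments fstruct : clear implicits.
Definition tstruct (S : Type) (ar : S -> nat) (D : Type) :=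
  forall P : S, (ar P).-tuple D -> Prop.

Arguments tstruct : clear implicits.

Fixpoint eval4 S ar D (I : fstruct S ar D) (th : nat -> D) (phi : form S ar) : FV :=
  match phi with
  | Atom P xs => I P (map_tuple th xs)
  | Neg a => inv (eval4 I th a)
  | And a b => glb_t2 (eval4 I th a) (eval4 I th b)
  | Or a b => lub_t2 (eval4 I th a) (eval4 I th b)
  | All x a => glb_tD (fun d => eval4 I (upd th x d) a)
  | Ex x a => lub_tD (fun d => eval4 I (upd th x d) a)
  end.

Fixpoint sat2 S ar D (M : tstruct S ar D) (th : nat -> D) (phi : form S ar) : Prop :=
  match phi with
  | Atom P xs => M P (map_tuple th xs)
  | Neg a => ~ sat2 M th a
  | And a b => sat2 M th a /\ sat2 M th b
  | Or a b => sat2 M th a \/ sat2 M th b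
  | All x a => forall d, sat2 M (upd th x d) a
  | Ex x a => exists d, sat2 M (upd th x d) a
  end.

Definition le_pS S ar D (I J : fstruct S ar D) : Prop :=
  forall P ds, le_p (I P ds) (J P ds).
Definition lt_pS S ar D (I J : fstruct S ar D) : Prop :=
  le_pS I J /\ I <> J.
Definition is_lub_pS S ar D (F : fstruct S ar D -> Prop) (L : fstruct S ar D) : Prop :=
  (forall K, F K -> le_pS K L) /\
  (forall L', (forall K, F K -> le_pS K L') -> le_pS L L').

Definition teq S ar D (M N : tstruct S ar D) : Prop :=
  forall P ds, M P ds <-> N P ds.
Definition le_tS S ar D (M N : tstruct S ar D) : Prop :=
  forall P ds, M P ds -> N P ds.
Definition glb_tS S ar D (F : tstruct S ar D -> Prop) : tstruct S ar D :=
  fun P ds => forall M, F M -> M P ds.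

Inductive tfsym (S : Type) : Type := Ct of S | Cf of S.
Arguments Ct {S}.
Arguments Cf {S}.
Arguments tfsym : clear implicits.
Definition tf_ar (S : Type) (ar : S -> nat) (Q : tfsym S) : nat :=
  match Q with Ct P => ar P | Cf P => ar P end.

Definition tf S ar D (I : fstruct S ar D) : tstruct (tfsym S) (tf_ar ar) D :=
  fun Q => match Q return (tf_ar ar Q).-tuple D -> Prop with
           | Ct P => fun ds => le_p Vt (I P ds)
           | Cf P => fun ds => le_p Vf (I P ds)
           end.

Fixpoint tr S ar (pos : bool) (phi : form S ar) : form (tfsym S) (tf_ar ar) :=
  match phi with
  | Atom P xs => if pos then Atom (Ct P) xs else Atom (Cf P) xs
  | Neg a => tr (~~ pos) a
  | And a b => if pos then And (tr true a) (tr true b) else Or (tr false a) (tr false b)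
  | Or a b => if pos then Or (tr true a) (tr true b) else And (tr false a) (tr false b)
  | All x a => if pos then All x (tr true a) else Ex x (tr false a)
  | Ex x a => if pos then Ex x (tr true a) else All x (tr false a)
  end.
Definition ct S ar (phi : form S ar) := tr true phi.
Definition cf S ar (phi : form S ar) := tr false phi.

(* forall xs (psi ⊃ L[xs]) with L = P(xs) if inf_pos, ¬P(xs) otherwise *)
Record INF (S : Type) (ar : S -> nat) := mkINF {
  inf_P : S;
  inf_pos : bool;
  inf_xs : (ar inf_P).-tuple nat;
  inf_psi : form S ar }.

Arguments INF : clear implicits.

Definition wf_INF S ar (phi : INF S ar) : Prop :=
  uniq (tval (inf_xs phi)) /\ {subset fv (inf_psi phi) <= tval (inf_xs phi)}.

Definition Oprop S ar D (phi : INF S ar) (I : fstruct S ar D) : fstruct S ar D :=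
  fun Q ds =>
    if dec (Q = inf_P phi /\
            forall th : nat -> D,
              le_p Vt (eval4 I (upds th (tval (inf_xs phi)) (tval ds)) (inf_psi phi)))
    then lub_p2 (if inf_pos phi then Vt else Vf) (I Q ds)
    else I Q ds.

Definition OV S ar D (V : seq (INF S ar)) (O : fstruct S ar D -> fstruct S ar D) : Prop :=
  exists phi, List.In phi V /\ O = Oprop phi.

(* A (possibly transfinite) sequence <J_xi>_{xi <= alpha} is represented by
   an index type X with a strict well-order lt having a least and a greatest
   element (an ordinal alpha+1, up to isomorphism). *)
Definition is_succ (X : Type) (lt : X -> X -> Prop) (x s : X) : Prop :=
  lt x s /\ forall y, lt x y -> y = s \/ lt s y.

Definition refinement_seq S ar D (W : (fstruct S ar D -> fstruct S ar D) -> Prop)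
  (I : fstruct S ar D) (X : Type) (lt : X -> X -> Prop) (J : X -> fstruct S ar D)
  (bot top : X) : Prop :=
  (forall x, ~ lt x x) /\
  (forall x y z, lt x y -> lt y z -> lt x z) /\
  (forall x y, x = y \/ lt x y \/ lt y x) /\
  well_founded lt /\
  (forall x, x = bot \/ lt bot x) /\
  (forall x, x = top \/ lt x top) /\
  J bot = I /\
  (forall x s, is_succ lt x s ->
     exists O, W O /\ J s = O (J x) /\ lt_pS (J x) (J s)) /\
  (forall x, x <> bot -> (~ exists y, is_succ lt y x) ->
     is_lub_pS (fun K => exists y, lt y x /\ K = J y) (J x)).

Definition stabilizing S ar D (W : (fstruct S ar D -> fstruct S ar D) -> Prop)
  (L : fstruct S ar D) : Prop :=
  forall O, W O -> O L = L.

Definition is_lim S ar D (W : (fstruct S ar D -> fstruct S ar D) -> Prop)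
  (I L : fstruct S ar D) : Prop :=
  exists (X : Type) (lt : X -> X -> Prop) (J : X -> fstruct S ar D) (bot top : X),
    refinement_seq W I lt J bot top /\ J top = L /\ stabilizing W L.

Record rule (S : Type) (ar : S -> nat) := mkRule {
  r_Q : tfsym S;
  r_xs : (tf_ar ar r_Q).-tuple nat;
  r_body : form (tfsym S) (tf_ar ar) }.

Arguments rule : clear implicits.

Definition rule_of S ar (phi : INF S ar) : rule S ar :=
  if inf_pos phi then @mkRule S ar (Ct (inf_P phi)) (inf_xs phi) (ct (inf_psi phi))
  else @mkRule S ar (Cf (inf_P phi)) (inf_xs phi) (ct (inf_psi phi)).

Definition Delta S ar (V : seq (INF S ar)) : seq (rule S ar) := map (@rule_of S ar) V.

Definition T_Delta S ar D (Dl : seq (rule S ar)) (M : tstruct (tfsym S) (tf_ar ar) D)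
  : tstruct (tfsym S) (tf_ar ar) D :=
  fun Q ds => M Q ds \/
    exists r, List.In r Dl /\ r_Q r = Q /\
      forall th : nat -> D, sat2 M (upds th (tval (r_xs r)) (tval ds)) (r_body r).

Definition models S ar D (Dl : seq (rule S ar)) (M : tstruct (tfsym S) (tf_ar ar) D) : Prop :=
  teq (T_Delta Dl M) M.

(* Through the encoding tf, the propagator O_phi acts as the immediate
   consequence operator of its rule: tf (O_phi K) = T_{phi^ct rule} (tf K),
   because a formula is >=_p t (resp. >=_p f) in K exactly when its ct (resp.
   cf) translation holds in tf K.  Stability of the limit therefore makes its
   encoding a model of Delta_V above tf I.  Conversely, transfinite induction
   along the refinement sequence keeps every tf (J x) below any such model M:
   successor steps because rule bodies are positive, so T is monotone, and
   limit steps because a <=_p-lub is >=_p t (resp. f) at a tuple only if some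
   earlier structure already is. *)
From Pilot Require Import Defs.
From mathcomp Require Import all_boot.
From Stdlib Require List.
From Stdlib Require Import Setoid ClassicalDescription Classical.

Set Implicit Arguments.
Unset Strict Implicit.
Unset Printing Implicit Defensive.

Lemma decP (P : Prop) : reflect P (dec P).
Proof. by rewrite /dec; case: excluded_middle_informative; constructor. Qed.

Lemma le_p_trans a b c : le_p a b -> le_p b c -> le_p a c.
Proof. by case: a; case: b; case: c. Qed.

Lemma le_p_lub_p2r a b : le_p b (lub_p2 a b).
Proof. by case: a; case: b. Qed.

Lemma le_p_pol_lub_p2 (a b : bool) x :
  le_p (if b then Vt else Vf) (lub_p2 (if a then Vt else Vf) x) =
  (a == b) || le_p (if b then Vt else Vf) x.
Proof. by case: a; case: b; case: x. Qed.

Lemma le_p_t_inv a : le_p Vt (Defs.inv a) = le_p Vf a. Proof. by case: a. Qed.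
Lemma le_p_f_inv a : le_p Vf (Defs.inv a) = le_p Vt a. Proof. by case: a. Qed.

Lemma le_p_t_glb_t2 a b : le_p Vt (glb_t2 a b) <-> le_p Vt a /\ le_p Vt b.
Proof. by case: a; case: b; intuition. Qed.
Lemma le_p_f_glb_t2 a b : le_p Vf (glb_t2 a b) <-> le_p Vf a \/ le_p Vf b.
Proof. by case: a; case: b; intuition. Qed.
Lemma le_p_t_lub_t2 a b : le_p Vt (lub_t2 a b) <-> le_p Vt a \/ le_p Vt b.
Proof. by case: a; case: b; intuition. Qed.
Lemma le_p_f_lub_t2 a b : le_p Vf (lub_t2 a b) <-> le_p Vf a /\ le_p Vf b.
Proof. by case: a; case: b; intuition. Qed.

Lemma le_p_t_glb_tD D (f : D -> FV) : le_p Vt (glb_tD f) <-> forall d, le_p Vt (f d).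
Proof.
rewrite /glb_tD; case: decP => [[d fd]|nf]; first by split=> // /(_ d); rewrite fd.
case: decP => [[[d fd] _]|_]; first by split=> // /(_ d); rewrite fd.
case: decP => [[d fd]|nu]; first by split=> // /(_ d); rewrite fd.
split=> [_ d|_]; last by case: decP.
by case E: (f d) => //; [case: nf | case: nu]; exists d.
Qed.

(* The glb of a family containing both u and i is f, which is below i for <=_p. *)
Lemma le_p_f_glb_tD D (f : D -> FV) : le_p Vf (glb_tD f) <-> exists d, le_p Vf (f d).
Proof.
rewrite /glb_tD; case: decP => [[d fd]|nf]; first by split=> // _; exists d; rewrite fd.
case: decP => [[_ [d fd]]|nui]; first by split=> // _; exists d; rewrite fd.
split=> [|[d]].
  by case: decP => // _; case: decP => // [[d fd]] _; exists d; rewrite fd.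
case E: (f d) => // _; first by case: nf; exists d.
case: decP => [[e fe]|_]; first by case: nui; split; [exists e | exists d].
by case: decP => // [] []; exists d.
Qed.

Lemma le_p_t_lub_tD D (f : D -> FV) : le_p Vt (lub_tD f) <-> exists d, le_p Vt (f d).
Proof.
rewrite /lub_tD; case: decP => [[d fd]|nt]; first by split=> // _; exists d; rewrite fd.
case: decP => [[_ [d fd]]|nui]; first by split=> // _; exists d; rewrite fd.
split=> [|[d]].
  by case: decP => // _; case: decP => // [[d fd]] _; exists d; rewrite fd.
case E: (f d) => // _; first by case: nt; exists d.
case: decP => [[e fe]|_]; first by case: nui; split; [exists e | exists d].
by case: decP => // [] []; exists d.
Qed.

Lemma le_p_f_lub_tD D (f : D -> FV) : le_p Vf (lub_tD f) <-> forall d, le_p Vf (f d).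
Proof.
rewrite /lub_tD; case: decP => [[d ft]|nt]; first by split=> // /(_ d); rewrite ft.
case: decP => [[[d fd] _]|_]; first by split=> // /(_ d); rewrite fd.
case: decP => [[d fd]|nu]; first by split=> // /(_ d); rewrite fd.
split=> [_ d|_]; last by case: decP.
by case E: (f d) => //; [case: nt | case: nu]; exists d.
Qed.

Local Arguments le_p : simpl never.

Lemma eval4_tf S ar D (I : fstruct S ar D) (phi : form S ar) th :
  (le_p Vt (eval4 I th phi) <-> sat2 (tf I) th (ct phi)) /\
  (le_p Vf (eval4 I th phi) <-> sat2 (tf I) th (cf phi)).
Proof.
rewrite /ct /cf.
elim: phi th => [P xs|a IH|a IHa b IHb|a IHa b IHb|x a IH|x a IH] th /=.
- by [].
- by rewrite le_p_t_inv le_p_f_inv; case: (IH th).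
- by rewrite le_p_t_glb_t2 le_p_f_glb_t2 (IHa th).1 (IHa th).2 (IHb th).1 (IHb th).2.
- by rewrite le_p_t_lub_t2 le_p_f_lub_t2 (IHa th).1 (IHa th).2 (IHb th).1 (IHb th).2.
- rewrite le_p_t_glb_tD le_p_f_glb_tD.
  by setoid_rewrite (fun d => (IH (upd th x d)).1); setoid_rewrite (fun d => (IH (upd th x d)).2).
- rewrite le_p_t_lub_tD le_p_f_lub_tD.
  by setoid_rewrite (fun d => (IH (upd th x d)).1); setoid_rewrite (fun d => (IH (upd th x d)).2).
Qed.

Lemma sat2_tr_mono S ar D (M N : tstruct (tfsym S) (tf_ar ar) D) (phi : form S ar) :
  le_tS M N -> forall pos th, sat2 M th (tr pos phi) -> sat2 N th (tr pos phi).
Proof.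
move=> MN; elim: phi => [P xs|a IH|a IHa b IHb|a IHa b IHb|x a IH|x a IH] [] th /=.
all: try by apply: MN.
all: try by apply: IH.
all: try by case=> ?; [left; apply: IHa | right; apply: IHb].
all: try by case=> ? ?; split; [apply: IHa | apply: IHb].
all: try by case=> d ?; exists d; apply: IH.
all: by move=> H d; apply: IH.
Qed.

Lemma r_body_rule_of S ar (phi : INF S ar) : r_body (rule_of phi) = ct (inf_psi phi).
Proof. by rewrite /rule_of; case: (inf_pos phi). Qed.

Lemma T_Delta_mono S ar D (V : seq (INF S ar)) (M N : tstruct (tfsym S) (tf_ar ar) D) :
  le_tS M N -> le_tS (T_Delta (Delta V) M) (T_Delta (Delta V) N).
Proof.
move=> MN Q ds [Mds | [r [inV [rQ fires]]]]; first by left; apply: MN.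
have [phi [er _]] := (List.in_map_iff _ _ _).1 inV; subst r Q.
right; exists (rule_of phi); do 2!split=> //; move=> th.
by move: (fires th); rewrite r_body_rule_of; apply: sat2_tr_mono.
Qed.

Lemma models_Delta_iff S ar D (V : seq (INF S ar)) (M : tstruct (tfsym S) (tf_ar ar) D) :
  models (Delta V) M <->
  forall phi, List.In phi V -> le_tS (T_Delta (Delta [:: phi]) M) M.
Proof.
split=> [HM phi inV Q ds [//|[r [[<-|[]] fires]]] | HV Q ds].
  by apply: (HM Q ds).1; right; exists (rule_of phi); split=> //; apply: List.in_map.
split=> [[//|[r [inV fires]]]|]; last by left.
have [phi [er inphi]] := (List.in_map_iff _ _ _).1 inV; subst r.
by apply: (HV phi inphi Q ds); right; exists (rule_of phi); split=> //; left.
Qed.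

Lemma tf_Oprop S ar D (phi : INF S ar) (K : fstruct S ar D) :
  teq (tf (Oprop phi K)) (T_Delta (Delta [:: phi]) (tf K)).
Proof.
case: phi => P pos xs psi [] Q ds; rewrite /= /Oprop /T_Delta /=.
all: case: decP => [[eQ fires] | nofire]; first subst Q.
- rewrite (le_p_pol_lub_p2 pos true); case: pos => /=.
  + split=> // _; right; exists (rule_of (mkINF true xs psi)).
    by split; [left | split=> // th; exact: (eval4_tf _ _ _).1.1 (fires th)].
  + by split=> [?|[//|[r [[<-|[]] [rQ _]]]]]; [left|].
- split=> [?|[//|[r [[<-|[]] [rQ body]]]]]; first by left.
  case: pos rQ body => //= [[eQ]] body; subst Q.
  by case: nofire; split=> // th; exact: (eval4_tf _ _ _).1.2 (body th).
- rewrite (le_p_pol_lub_p2 pos false); case: pos => /=.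
  + by split=> [?|[//|[r [[<-|[]] [rQ _]]]]]; [left|].
  + split=> // _; right; exists (rule_of (mkINF false xs psi)).
    by split; [left | split=> // th; exact: (eval4_tf _ _ _).1.1 (fires th)].
- split=> [?|[//|[r [[<-|[]] [rQ body]]]]]; first by left.
  case: pos rQ body => //= [[eQ]] body; subst Q.
  by case: nofire; split=> // th; exact: (eval4_tf _ _ _).1.2 (body th).
Qed.

Lemma le_pS_trans S ar D (I J K : fstruct S ar D) :
  le_pS I J -> le_pS J K -> le_pS I K.
Proof. by move=> IJ JK P ds; apply: le_p_trans (IJ P ds) (JK P ds). Qed.

Lemma tf_mono S ar D (I J : fstruct S ar D) : le_pS I J -> le_tS (tf I) (tf J).
Proof. by move=> IJ [] P ds Ids; apply: le_p_trans Ids (IJ P ds). Qed.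

Lemma Oprop_inflationary S ar D (phi : INF S ar) (K : fstruct S ar D) :
  le_pS K (Oprop phi K).
Proof.
by move=> P ds; rewrite /Oprop; case: decP => _; [apply: le_p_lub_p2r | case: (K P ds)].
Qed.

(* The upper bound [U] is i where some member of [F] is >=_p a, and inv a
   (incomparable with a) elsewhere. *)
Lemma is_lub_pS_le_p S ar D (F : fstruct S ar D -> Prop) (L : fstruct S ar D)
    a P (ds : (ar P).-tuple D) :
  Defs.inv a <> a -> is_lub_pS F L -> le_p a (L P ds) ->
  exists K, F K /\ le_p a (K P ds).
Proof.
move=> a_tf [_ leastL] aL; apply: NNPP => none.
pose U : fstruct S ar D :=
  fun Q es => if dec (exists K, F K /\ le_p a (K Q es)) then Vi else Defs.inv a.
have ubU K : F K -> le_pS K U.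
  move=> FK Q es; rewrite /U; case: decP => [_|noK]; first by case: (K Q es).
  have : ~~ le_p a (K Q es) by apply/negP => aK; apply: noK; exists K.
  by case: (a) a_tf; case: (K Q es).
have := leastL U ubU P ds; rewrite /U; case: decP => // _.
by case: (a) a_tf aL; case: (L P ds).
Qed.

Lemma tf_is_lub_pS S ar D (F : fstruct S ar D -> Prop) (L : fstruct S ar D) Q
    (ds : (tf_ar ar Q).-tuple D) :
  is_lub_pS F L -> @tf S ar D L Q ds -> exists K, F K /\ @tf S ar D K Q ds.
Proof. by case: Q ds => P ds; apply: is_lub_pS_le_p. Qed.

Lemma refinement_seq_ind S ar D W (I : fstruct S ar D) X lt (J : X -> fstruct S ar D)
    bot top (Pr : fstruct S ar D -> Prop) :
  refinement_seq W I lt J bot top ->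
  Pr I ->
  (forall O K, W O -> Pr K -> Pr (O K)) ->
  (forall F L, (exists K, F K) -> is_lub_pS F L -> (forall K, F K -> Pr K) -> Pr L) ->
  forall x, Pr (J x).
Proof.
move=> [_ [_ [_ [wf [geBot [_ [Jbot [Jsucc Jlim]]]]]]]] PrI PrO PrLub.
apply: (well_founded_ind wf) => x IH.
have [->|ne_bot] := classic (x = bot); first by rewrite Jbot.
have [[y succ_yx]|not_succ] := classic (exists y, is_succ lt y x).
  by have [O [WO [-> _]]] := Jsucc _ _ succ_yx; apply: PrO WO (IH _ succ_yx.1).
apply: (PrLub _ _ _ (Jlim x ne_bot not_succ)); last by move=> K [y [ylx ->]]; apply: IH.
by exists (J bot), bot; split=> //; case: (geBot x).
Qed.

Theorem proposition4p6 (S : finType) (ar : S -> nat) (V : seq (INF S ar))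
  (D : Type) (HD : inhabited D) (I : fstruct S ar D) :
  (forall phi, List.In phi V -> wf_INF phi) ->
  forall L : fstruct S ar D, is_lim (OV V) I L ->
  teq (tf L)
      (glb_tS (fun M : tstruct (tfsym S) (tf_ar ar) D =>
                 models (Delta V) M /\ le_tS (tf I) M)).
Proof.
move=> _ L [X [lt [J [bot [top [Jseq [JL Jstab]]]]]]]; subst L.
have tfL_least M : models (Delta V) M -> le_tS (tf I) M -> le_tS (tf (J top)) M.
  move=> /models_Delta_iff TM IM.
  apply: (refinement_seq_ind (Pr := fun K => le_tS (tf K) M) Jseq) => //.
    move=> _ K [phi [Vphi ->]] KM Q ds /tf_Oprop Tds.
    exact: TM Vphi Q ds (T_Delta_mono KM Tds).
  by move=> F K' _ lubK' FM Q ds /(tf_is_lub_pS lubK') [K [/FM]]; apply.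
have tfL_model : models (Delta V) (tf (J top)).
  apply/models_Delta_iff => phi Vphi Q ds /tf_Oprop.
  by rewrite (Jstab _ (ex_intro _ phi (conj Vphi erefl))).
have I_le_L : le_tS (tf I) (tf (J top)).
  apply/tf_mono/(refinement_seq_ind (Pr := le_pS I) Jseq).
  - by move=> P ds; case: (I P ds).
  - by move=> O K [phi [_ ->]] IK; apply: le_pS_trans IK (Oprop_inflationary _ _).
  - by move=> F K [K0 FK0] [ubK _] FI; apply: le_pS_trans (FI _ FK0) (ubK _ FK0).
move=> Q ds; split=> [tfL M [HM IM] | in_glb]; first exact: tfL_least HM IM Q ds tfL.
exact: in_glb _ (conj tfL_model I_le_L).
Qed.
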